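(* Let $(S,\ast)$ be an adequate partial semigroup and let $A\subseteq S$. If there is an idempotent $p\in\overline{A}\cap J_\delta(S)$, then there is a nonempty set $T$ of functions such that (i) for all $f\in T$, $\mathrm{domain}(f)\in\omega$ and $\mathrm{range}(f)\subseteq A$; (ii) for all $f\in T$ and all $x\in B_f(T)$, $B_{f^\frown x}(T)\subseteq x^{-1}B_f(T)$; (iii) for all $F\in\mathcal{P}_f(T)$, $\bigcap_{f\in F}B_f(T)$ is a $J_\delta$-set. Moreover, there is a downward directed family $\langle A_F\rangle_{F\in I}$ of subsets of $A$ such that (a) for all $F\in I$ and all $x\in A_F$ there exists $G\in I$ with $A_G\subseteq x^{-1}A_F$; (b) for each $\mathcal{F}\in\mathcal{P}_f(I)$, $\bigcap_{F\in\mathcal{F}}A_F$ is a $J_\delta$-set.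
   Context: A partial semigroup is a pair $(S,\ast)$ where $\ast$ is an operation defined on a subset of $S\times S$ such that $(x\ast y)\ast z=x\ast(y\ast z)$ in the sense that if either side is defined, so is the other and they are equal. $\phi_S(s)=\{t: s\ast t\text{ defined}\}$, $\sigma_S(H)=\bigcap_{s\in H}\phi_S(s)$ for $H\in\mathcal{P}_f(S)$ (finite nonempty subsets); $S$ is adequate if all $\sigma_S(H)\ne\emptyset$. $\overline{A}=\{p\in\beta S: A\in p\}$. $\delta S=\bigcap_{x\in S}\overline{\phi_S(x)}$, with operation $p\ast q=\{B\subseteq S:\{s: s^{-1}B\in q\}\in p\}$, where $s^{-1}B=\{t\in\phi_S(s): s\ast t\in B\}$. A sequence $\langle y_n\rangle$ in $S$ is adequate if $\prod_{n\in F}y_n$ is defined for every $F\in\mathcal{P}_f(\mathbb{N})$ and for every $K\in\mathcal{P}_f(S)$ there is $m$ with $\prod_{n\in F}y_n\in\sigma_S(K)$ whenever $\min F\ge m$; $\mathcal{T}_S$ is the set of adequate sequences. For $W\in\mathcal{P}_f(S)$, $a\in S$, $W\ast a=\{w\ast a: w\in W,\ w\ast a\text{ defined}\}$. $B\subseteq S$ is a $J_\delta$-set if for every $F\in\mathcal{P}_f(\mathcal{T}_S)$ and $W\in\mathcal{P}_f(S)$ there exist $a\in\sigma_S(W)$ and $H\in\mathcal{P}_f(\mathbb{N})$ with $\prod_{t\in H}f(t)\in\sigma_S(W\ast a)$ and $a\ast\prod_{t\in H}f(t)\in B$ for each $f\in F$; $J_\delta(S)=\{p\in\delta S:\text{every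 member of }p\text{ is a }J_\delta\text{-set}\}$. $\omega$ is the first infinite ordinal, $[n]=\{0,\dots,n-1\}$. For $f$ with domain $[n]$ and $x\in S$, $f^\frown x=f\cup\{(n,x)\}$. For a set $T$ of such functions and $f\in T$, $B_f(T)=\{x: f^\frown x\in T\}$. A family $\langle A_F\rangle_{F\in I}$ is downward directed if for all $F,G\in I$ there is $H\in I$ with $A_H\subseteq A_F\cap A_G$. *)

From Stdlib Require Import List Arith Sorted.
Import ListNotations.

Section PS.
Variable S : Type.
Variable op : S -> S -> option S.

(* (x*y)*z = x*(y*z): either side defined iff the other is, and they agree. *)
Definition partial_assoc : Prop :=
  forall x y z,
    match op x y with Some xy => op xy z | None => None end =
    match op y z with Some yz => op x yz | None => None end.

Definition phi (s : S) : S -> Prop := fun t => op s t <> None.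

Definition sigma (H : list S) : S -> Prop :=
  fun t => forall s, In s H -> op s t <> None.

Definition adequate : Prop :=
  forall H : list S, H <> [] -> exists t, sigma H t.

Definition inv (s : S) (B : S -> Prop) : S -> Prop :=
  fun t => exists u, op s t = Some u /\ B u.

(* product x_1 * x_2 * ... * x_n of a nonempty list (None if undefined/empty) *)
Fixpoint prodl (l : list S) : option S :=
  match l with
  | [] => None
  | [x] => Some x
  | x :: l' => match prodl l' with Some v => op x v | None => None end
  end.

(* finite nonempty subsets of N are represented by strictly increasing
   nonempty lists; prod_{n in F} y_n = prodl (map y F) (increasing order) *)
Definition finN (F : list nat) : Prop := Sorted lt F /\ F <> [].

Definition adequate_seq (y : nat -> S) : Prop :=
  (forall F, finN F -> prodl (map y F) <> None) /\
  (forall K : list S, K <> [] -> exists m, forall F, finN F -> m <= hd 0 F ->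
      exists v, prodl (map y F) = Some v /\ sigma K v).

Definition Jdelta_set (B : S -> Prop) : Prop :=
  forall (F : list (nat -> S)) (W : list S),
    F <> [] -> (forall f, In f F -> adequate_seq f) -> W <> [] ->
    exists a, sigma W a /\
    exists H, finN H /\
      forall f, In f F ->
        exists v, prodl (map f H) = Some v /\
          (* v in sigma_S(W * a) *)
          (forall w wa, In w W -> op w a = Some wa -> op wa v <> None) /\
          inv a B v.

Definition ultrafilter (p : (S -> Prop) -> Prop) : Prop :=
  p (fun _ => True) /\ ~ p (fun _ => False) /\
  (forall B C : S -> Prop, (forall x, B x -> C x) -> p B -> p C) /\
  (forall B C : S -> Prop, p B -> p C -> p (fun x => B x /\ C x)) /\
  (forall B : S -> Prop, p B \/ p (fun x => ~ B x)).

Definition in_deltaS (p : (S -> Prop) -> Prop) : Prop :=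
  ultrafilter p /\ forall x, p (phi x).

Definition ps_mul (p q : (S -> Prop) -> Prop) : (S -> Prop) -> Prop :=
  fun B => p (fun s => q (inv s B)).

Definition in_Jdelta (p : (S -> Prop) -> Prop) : Prop :=
  in_deltaS p /\ forall B, p B -> Jdelta_set B.

End PS.

Arguments partial_assoc {S}. Arguments phi {S}. Arguments sigma {S}.
Arguments adequate {S}. Arguments inv {S}. Arguments prodl {S}.
Arguments adequate_seq {S}. Arguments Jdelta_set {S}.
Arguments ultrafilter {S}. Arguments in_deltaS {S}. Arguments ps_mul {S}.
Arguments in_Jdelta {S}.

(** For [C] in the idempotent ultrafilter [p] let
    [C^* = {s ∈ C : s^{-1}C ∈ p}].  Idempotence gives [C^* ∈ p], and
    associativity gives [x^{-1}C^* ∈ p] for every [x ∈ C^*].  Hence the sets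
    [B_{()} = A^*] and [B_{f⌢x} = (x^{-1}B_f ∩ A)^*] stay in [p] along the tree
    they define, and so do the sets [(B ∩ A)^*] for [B ∈ p]; every finite
    intersection of members of [p] is a [J_δ]-set because [p ∈ J_δ(S)]. *)
From Stdlib Require Import List.
Import ListNotations.

Lemma inv_mono (S : Type) (op : S -> S -> option S) (x : S) (B C : S -> Prop) :
  (forall y, B y -> C y) -> forall y, inv op x B y -> inv op x C y.
Proof. intros HBC y [u [Hxy Bu]]. exists u. auto. Qed.

Lemma inv_comp (S : Type) (op : S -> S -> option S) (x y u : S) (C : S -> Prop) :
  partial_assoc op -> op x y = Some u ->
  forall z, inv op y (inv op x C) z -> inv op u C z.
Proof.
  intros Hassoc Hxy z [v [Hyz [w [Hxv Cw]]]].
  exists w. split; [|exact Cw].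
  pose proof (Hassoc x y z) as E. rewrite Hxy, Hyz in E.
  rewrite E. exact Hxv.
Qed.

Section IdempotentUltrafilter.
Variables (S : Type) (op : S -> S -> option S).
Hypothesis Hassoc : partial_assoc op.
Variable p : (S -> Prop) -> Prop.
Hypothesis Hu : ultrafilter p.
Hypothesis Hidem : forall B, ps_mul op p p B <-> p B.

Lemma ultra_mono (B C : S -> Prop) : (forall x, B x -> C x) -> p B -> p C.
Proof. apply Hu. Qed.

Lemma ultra_and (B C : S -> Prop) : p B -> p C -> p (fun x => B x /\ C x).
Proof. apply Hu. Qed.

Lemma ultra_all_in (X : Type) (F : list X) (Q : X -> S -> Prop) :
  (forall f, In f F -> p (Q f)) -> p (fun x => forall f, In f F -> Q f x).
Proof.
  induction F as [|a F IH]; simpl; intros HF.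
  - apply ultra_mono with (fun _ => True); [intros x _ f []|apply Hu].
  - apply ultra_mono with (fun x => Q a x /\ (forall f, In f F -> Q f x)).
    + intros x [Ha HF'] f [<-|Hin]; auto.
    + apply ultra_and; auto.
Qed.

Definition star (C : S -> Prop) : S -> Prop := fun s => C s /\ p (inv op s C).

Lemma star_sub (C : S -> Prop) x : star C x -> C x.
Proof. intros [Cx _]. exact Cx. Qed.

Lemma star_mono (B C : S -> Prop) :
  (forall x, B x -> C x) -> forall x, star B x -> star C x.
Proof.
  intros HBC x [Bx HpB]. split; auto.
  apply ultra_mono with (2 := HpB). apply inv_mono. exact HBC.
Qed.

Lemma star_mem (C : S -> Prop) : p C -> p (star C).
Proof. intros HC. apply ultra_and; [exact HC|apply Hidem; exact HC]. Qed.

Lemma inv_star_mem (C : S -> Prop) x : star C x -> p (inv op x (star C)).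
Proof.
  intros [Cx HpxC].
  assert (Hpp : p (fun y => p (inv op y (inv op x C)))) by (apply Hidem; exact HpxC).
  apply ultra_mono with (fun y => inv op x C y /\ p (inv op y (inv op x C))).
  2: apply ultra_and; assumption.
  intros y [[u [Hxy Cu]] Hpy]. exists u. split; [exact Hxy|split; [exact Cu|]].
  apply ultra_mono with (2 := Hpy). apply inv_comp; assumption.
Qed.

Variable A : S -> Prop.
Hypothesis HpA : p A.

Definition star_in (B : S -> Prop) : S -> Prop := star (fun y => B y /\ A y).

Lemma star_in_sub (B : S -> Prop) x : star_in B x -> B x /\ A x.
Proof. apply star_sub. Qed.

Lemma star_in_mono (B C : S -> Prop) :
  (forall x, B x -> C x) -> forall x, star_in B x -> star_in C x.
Proof. intros HBC. apply star_mono. intros x [Bx Ax]. auto. Qed.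

Lemma star_in_and (B C : S -> Prop) x :
  star_in (fun y => B y /\ C y) x -> star_in B x /\ star_in C x.
Proof. intros Hx. split; revert x Hx; apply star_in_mono; tauto. Qed.

Lemma star_in_mem (B : S -> Prop) : p B -> p (star_in B).
Proof. intros HB. apply star_mem, ultra_and; assumption. Qed.

(* On the tree, [branch f] is the paper's [B_f(T)] (see [tree_snocE]). *)
Definition branch (f : list S) : S -> Prop :=
  fold_left (fun B x => star_in (inv op x B)) f (star A).

Lemma branch_snoc f x : branch (f ++ [x]) = star_in (inv op x (branch f)).
Proof. unfold branch. rewrite fold_left_app. reflexivity. Qed.

Lemma branch_sub f x : branch f x -> A x.
Proof.
  destruct f as [|y f] using rev_ind.
  - apply star_sub.
  - rewrite branch_snoc. intros Hx. apply (star_in_sub _ _ Hx).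
Qed.

Lemma inv_branch_mem f x : branch f x -> p (inv op x (branch f)).
Proof.
  destruct f as [|y f] using rev_ind.
  - apply inv_star_mem.
  - rewrite branch_snoc. apply inv_star_mem.
Qed.

Inductive tree : list S -> Prop :=
  | tree_nil : tree []
  | tree_snoc f x : tree f -> branch f x -> tree (f ++ [x]).

Lemma tree_snocE f x : tree (f ++ [x]) <-> tree f /\ branch f x.
Proof.
  split.
  - intros Ht. inversion Ht as [Hnil|g y Hg Hy Heq].
    + destruct f; discriminate.
    + apply app_inj_tail in Heq as [-> ->]. auto.
  - intros [Hf Hx]. constructor; assumption.
Qed.

Lemma tree_sub f : tree f -> forall x, In x f -> A x.
Proof.
  induction 1 as [|f y Hf IH Hy]; intros x Hin; [destruct Hin|].
  apply in_app_or in Hin as [Hin|[<-|[]]]; [auto|exact (branch_sub _ _ Hy)].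
Qed.

Lemma tree_branch_mem f : tree f -> p (branch f).
Proof.
  induction 1 as [|f x Hf IH Hx].
  - apply star_mem, HpA.
  - rewrite branch_snoc. apply star_in_mem, inv_branch_mem, Hx.
Qed.

Lemma tree_succ_inv f x :
  tree (f ++ [x]) -> forall y, tree ((f ++ [x]) ++ [y]) -> inv op x (fun z => tree (f ++ [z])) y.
Proof.
  intros Hfx y Hfxy.
  apply tree_snocE in Hfx as [Hf _].
  apply tree_snocE in Hfxy as [_ Hy]. rewrite branch_snoc in Hy.
  apply star_in_sub in Hy as [Hy _].
  apply inv_mono with (2 := Hy). intros z Hz. apply tree_snocE. auto.
Qed.

Lemma tree_succ_mem (F : list (list S)) :
  (forall f, In f F -> tree f) -> p (fun x => forall f, In f F -> tree (f ++ [x])).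
Proof.
  intros HF.
  apply ultra_mono with (fun x => forall f, In f F -> branch f x).
  - intros x Hx f Hin. apply tree_snocE. auto.
  - apply ultra_all_in. intros f Hin. apply tree_branch_mem. auto.
Qed.

End IdempotentUltrafilter.

Arguments tree {S} op p A.
Arguments star_in {S} op p A.
Arguments ultra_and {S p} Hu {B C}.
Arguments star_in_and {S op p} Hu {A B C x}.
Arguments star_in_mem {S op p} Hu Hidem {A} HpA {B}.
Arguments tree_succ_mem {S op} Hassoc {p} Hu Hidem {A} HpA {F}.
Arguments star_in_sub {S op p A B x}.
Arguments inv_star_mem {S op} Hassoc {p} Hu Hidem {C x}.

Theorem theorem4p4 (S : Type) (op : S -> S -> option S)
  (Hassoc : partial_assoc op) (Hadeq : adequate op)
  (A : S -> Prop) (p : (S -> Prop) -> Prop)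
  (HpJ : in_Jdelta op p) (HpA : p A)
  (Hidem : forall B, ps_mul op p p B <-> p B) :
  (* functions with domain n in omega are encoded as lists of length n;
     f^x = f ++ [x]; B_f(T) = fun x => T (f ++ [x]) *)
  (exists T : list S -> Prop,
     (exists f, T f) /\
     (forall f, T f -> forall x, In x f -> A x) /\
     (forall f, T f -> forall x, T (f ++ [x]) ->
        forall y, T ((f ++ [x]) ++ [y]) -> inv op x (fun z => T (f ++ [z])) y) /\
     (forall F : list (list S), F <> [] -> (forall f, In f F -> T f) ->
        Jdelta_set op (fun x => forall f, In f F -> T (f ++ [x])))) /\
  (exists (I : Type) (AF : I -> S -> Prop),
     (exists i : I, True) /\
     (forall F G : I, exists H : I, forall x, AF H x -> AF F x /\ AF G x) /\
     (forall F : I, forall x, AF F x -> A x) /\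
     (forall F : I, forall x, AF F x -> exists G : I, forall y, AF G y -> inv op x (AF F) y) /\
     (forall FF : list I, FF <> [] -> Jdelta_set op (fun x => forall F, In F FF -> AF F x))).
Proof.
  destruct HpJ as [[Hu _] HJ].
  split.
  - exists (tree op p A).
    split; [exists []; constructor|].
    split; [apply tree_sub|].
    split; [intros f _ x; apply tree_succ_inv|].
    intros F _ HF. apply HJ, (tree_succ_mem Hassoc Hu Hidem HpA HF).
  - exists {B : S -> Prop | p B}, (fun B => star_in op p A (proj1_sig B)).
    split; [exists (exist _ A HpA); trivial|].
    split.
    { intros [B HB] [C HC]. exists (exist _ _ (ultra_and Hu HB HC)).
      intros x Hx. apply (star_in_and Hu Hx). }
    split; [intros B x Hx; apply (star_in_sub Hx)|].
    split.
    { intros B x Hx.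
      exists (exist _ _ (inv_star_mem Hassoc Hu Hidem Hx)).
      intros y Hy. apply (star_in_sub Hy). }
    intros FF _. apply HJ. apply ultra_all_in; [exact Hu|].
    intros [B HB] _. apply (star_in_mem Hu Hidem HpA HB).
Qed.
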